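(* Let $\underline{\mathcal M}=(\mathcal M_n)_n$ be a sequence of $(\Delta,\Omega,\Psi,\Theta)$-models of high girth that converges locally to $\theta\in\mathcal P(\mathfrak T)$, and let $p$ be a marginal assignment. For every $\varepsilon>0$ there exists $\delta>0$ such that for every $\ell>0$ there exists $n_0$ such that for all $n>n_0$ the following holds. If $G\in\mathcal G(\mathcal M_n)$ satisfies $\frac1n\sum_{x\in V_n}\big\langle\|\langle\boldsymbol\sigma[\cdot|x]\mid\nabla_\ell(G,x)\rangle_{\mu_G}-p_{\ell,\partial^\ell[G,x]}\|_{TV}\big\rangle_{\mu_G}<\delta^9$, then $\mu_G$ is $(\varepsilon,2)$-symmetric and $\sum_{x\in V_n}\|\mu_{G\downarrow x}-p_{\ell,\partial^\ell[G,x]}\|_{TV}<\varepsilon n$.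
   Context: Fix an integer $\Delta>0$, finite nonempty sets $\Omega,\Theta$ and a finite set $\Psi$ of functions $\psi:\Omega^h\to(0,\infty)$, $h\in\{1,\dots,\Delta\}$. A $(\Delta,\Omega,\Psi,\Theta)$-model $\mathcal M=(V,F,d,t,(\psi_a)_{a\in F})$: countable sets $V,F$ of variable/constraint nodes; $d:V\cup F\to\{1,\dots,\Delta\}$, $\sum_Vd=\sum_Fd$; clones $C_V=\bigcup_x\{x\}\times[d(x)]$, $C_F=\bigcup_a\{a\}\times[d(a)]$; $t:C_V\cup C_F\to\Theta$ with $|t^{-1}(\theta)\cap C_V|=|t^{-1}(\theta)\cap C_F|$; $\psi_a\in\Psi$, $\psi_a:\Omega^{d(a)}\to(0,\infty)$; size $|V|$. An $\mathcal M$-factor graph is a type-preserving bijection $G:C_V\to C_F$, viewed as a bipartite multigraph on $V\cup F$ (distances refer to it); $\partial(G,a,j)$ the variable matched to $(a,j)$; $\mu_G(\sigma)\propto\prod_a\psi_a(\sigma(\partial(G,a,1)),\dots,\sigma(\partial(G,a,d(a))))$ for $\sigma:V\to\Omega$ (Gibbs measure), $\langle\cdot\rangle_{\mu_G}$ its expectation, $\mu_{G\downarrow S}$ marginal; $\boldsymbol\sigma[\omega|x]=\mathbf 1\{\boldsymbol\sigma(x)=\omega\}$. $\nabla_\ell(G,x)$ is the $\sigma$-algebra on $\Omega^{V}$ generated by the events $\{\boldsymbol\sigma(y)=\omega\}$ for $\omega\in\Omega$ and $y$ at distance $\ell$ or $\ell+1$ from $x$; $\langle\cdot|\nabla_\ell(G,x)\rangle_{\mu_G}$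 is conditional expectation. Templates, classes up to isomorphism (preserving root, node kinds, degrees, clone types, weight functions, clone-indexed adjacencies); $\mathfrak T$ acyclic classes, $\mathcal V$/$\mathcal F$ rooted at variable/constraint nodes; $d_T$, $\psi_T$, $T\uparrow j$ (re-rooting at the neighbour on the root's $j$-th clone), $\partial^\ell T$ truncation at depth $\ell$, $\partial^\ell[G,v]$ depth-$\ell$ neighbourhood of $v$ rooted at $v$. $\mathcal M_n=(V_n,F_n,\dots)$ has size $n$; $\mathbf G$ uniform on $\mathcal G(\mathcal M_n)$. Local convergence: $\lim_n\mathbb E\|\lambda_{\mathbf G,\ell}-\theta_\ell\|_{TV}=0$ $\forall\ell\ge1$, $\lambda_{G,\ell}=(|V_n|+|F_n|)^{-1}(\sum_x\delta_{\partial^\ell[G,x]}+\sum_a\delta_{\partial^{\ell+1}[G,a]})$, $\theta_\ell$ the image of $\theta$ under $T\mapsto\partial^\ell T$ ($T\in\mathcal V$), $\partial^{\ell+1}T$ ($T\in\mathcal F$); $\mathbf T\sim\theta$. High girth: for all $\ell,l>0$, $\liminf_n\Pr[\mathbf G$ has no cycle of length $\le l]>0$ and likewise for the planted graph $\hat{\mathbf G}_\ell$ with $\Pr[\hat{\mathbf G}_\ell=G]=Z(G)/(|\mathcal G(\mathcal M_n)|\mathbb E[Z(\mathbf G)|\mathbf G\cong_\ell G])$, where $G\cong_\ell G'$ iff all depth-$\ell$ variable and depth-$(\ell+1)$ constraint neighbourhoods agree and $Z$ is the normalizing constant of $\mu_G$. Marginal assignment: measurable $T\mapsto p_T$, $p_T\in\mathcal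 P(\Omega)$ for $T\in\mathcal V$; for $T\in\mathcal F$, $p_T\in\mathcal P(\Omega^{d_T})$ with $j$-th marginal $p_{T\uparrow j}$ maximizing $H(\nu)+\langle\ln\psi_T(\boldsymbol\sigma)\rangle_\nu$ among $\nu$ with these marginals. $p_{\ell,T}=\mathbb E[p_{\mathbf T}|\partial^\ell\mathbf T=T]$ for $T=\partial^\ell T_0$, $T_0\in\mathfrak T\cap\mathcal V$; $p_{\ell,T}$ uniform for non-acyclic $T$. A measure $\mu$ on $\Omega^{V_n}$ is $(\varepsilon,2)$-symmetric if $\frac1{n^2}\sum_{x,y\in V_n}\|\mu_{\downarrow\{x,y\}}-\mu_{\downarrow x}\otimes\mu_{\downarrow y}\|_{TV}<\varepsilon$, where $\mu_{\downarrow\{x,y\}}$ is the law of $(\boldsymbol\sigma(x),\boldsymbol\sigma(y))$. *)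

From HB Require Import structures.
From mathcomp Require Import all_boot all_order all_algebra.
From mathcomp Require Import all_classical all_reals all_analysis.

Set Implicit Arguments.
Unset Strict Implicit.
Unset Printing Implicit Defensive.

Import Order.TTheory GRing.Theory Num.Theory.
Local Open Scope classical_set_scope.
Local Open Scope ring_scope.

(* Because isomorphisms preserve clone-indexed adjacencies, an acyclic       *)
(* rooted template is canonically encoded by its "address function": the    *)
(* node reached from the root by following clone indices i1, i2, ... is      *)
(* stored at address [:: i1; i2; ...].  A node label records the clone      *)
(* types (their number is the degree), the weight function (None for a      *)
(* variable node, Some psi for a constraint node) and the index of the clone *)
(* through which the node is attached to its parent (None for the root).     *)
(* Clone indices are 0-based.                                                 *)

Section Templates.
Variables (Theta PsiI : finType).

Definition label := (seq Theta * option PsiI * option nat)%type.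

Definition templ := seq nat -> option label.
HB.instance Definition _ := gen_eqMixin templ.
HB.instance Definition _ := gen_choiceMixin templ.
HB.instance Definition _ := isPointed.Build templ (fun _ => None).

Definition trunc (k : nat) (T : templ) : templ :=
  fun s => if (size s <= k)%N then T s else None.

Definition root_is_var (T : templ) : bool :=
  if T [::] is Some (_, None, _) then true else false.

Definition trunc_for (l : nat) (T : templ) : templ :=
  if root_is_var T then trunc l T else trunc l.+1 T.

Definition lab_ok (Delta : nat) (ar : PsiI -> nat) (lb : label) : Prop :=
  let: (ts, k, _) := lb in
  (0 < size ts <= Delta)%N /\ (forall psi, k = Some psi -> size ts = ar psi).

(* T encodes an element of \mathfrak T (an acyclic template, possibly infinite) *)
Definition wf_templ (Delta : nat) (ar : PsiI -> nat) (T : templ) : Prop :=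
  (exists ts k, T [::] = Some (ts, k, None)) /\
  (forall s lb, T s = Some lb -> lab_ok Delta ar lb) /\
  (forall s i,
     match T s with
     | None => T (rcons s i) = None
     | Some (ts, k, u) =>
         if (i < size ts)%N && (Some i != u) then
           exists ts' k' j, T (rcons s i) = Some (ts', k', Some j) /\
             (j < size ts')%N /\ (k == None) = (k' != None) /\
             onth ts i = onth ts' j
         else T (rcons s i) = None
     end).

(* re-rooting T |-> T \uparrow j at the neighbour on the root's j-th clone *)
Definition reroot (T : templ) (j : nat) : templ := fun s =>
  match T [:: j] with
  | Some (ts, kd, Some k) =>
      match s with
      | [::] => Some (ts, kd, None)
      | i :: s' =>
          if i == k then
            match s' with
            | [::] => omap (fun lb : label => let: (ts0, k0, _) := lb in
                                             (ts0, k0, Some j)) (T [::])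
            | i2 :: _ => if i2 == j then None else T s'
            end
          else T (j :: s)
      end
  | _ => None
  end.

Definition tgen : set (set templ) :=
  [set A | exists k (B : set templ), A = trunc k @^-1` B].

Definition TT := g_sigma_algebraType tgen.

End Templates.

Section Models.
Variables (Delta : nat) (Theta PsiI : finType) (ar : PsiI -> nat).

(* V = 'I_nV, F = 'I_nF (F is finite since degrees are >= 1);
   tV x j / tF a j = type of the clone (x,j) / (a,j) (only j < degree used) *)
Record model := Model {
  nV : nat; nF : nat;
  dV : 'I_nV -> nat; dF : 'I_nF -> nat;
  tV : 'I_nV -> nat -> Theta; tF : 'I_nF -> nat -> Theta;
  wF : 'I_nF -> PsiI }.

Definition CV (M : model) := {x : 'I_(nV M) & 'I_(dV x)}.
Definition CF (M : model) := {a : 'I_(nF M) & 'I_(dF a)}.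

Definition model_ok (M : model) : Prop :=
  (forall x : 'I_(nV M), (0 < dV x <= Delta)%N) /\
  (forall a : 'I_(nF M), (0 < dF a <= Delta)%N) /\
  (forall a : 'I_(nF M), dF a = ar (wF a)) /\
  (\sum_(x : 'I_(nV M)) dV x = \sum_(a : 'I_(nF M)) dF a)%N /\
  (forall th : Theta,
     #|[set c : {: CV M} | tV (tag c) (tagged c) == th]| =
     #|[set c : {: CF M} | tF (tag c) (tagged c) == th]|).

Definition fgraphs (M : model) : {set {ffun CV M -> CF M}} :=
  [set G : {ffun CV M -> CF M} | [&& injectiveb G,
     [forall b, exists c, G c == b] &
     [forall c, tF (tag (G c)) (tagged (G c)) == tV (tag c) (tagged c)]]].

Definition node (M : model) := ('I_(nV M) + 'I_(nF M))%type.

Section Graph.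
Variables (M : model) (G : {ffun CV M -> CF M}).

Definition joins (c : CV M) (u v : node M) : bool :=
  ((u == inl (tag c)) && (v == inr (tag (G c)))) ||
  ((v == inl (tag c)) && (u == inr (tag (G c)))).

Definition adj (u v : node M) : bool := [exists c, joins c u v].

Fixpoint within (k : nat) (u v : node M) : bool :=
  match k with
  | 0 => u == v
  | k'.+1 => within k' u v || [exists w, within k' u w && adj w v]
  end.

(* a cycle of length L (L >= 2; length-2 cycles are double edges) all of
   whose nodes satisfy P *)
Definition cycle_in (L : nat) (P : node M -> Prop) : Prop :=
  (2 <= L)%N /\ exists (ns : 'I_L -> node M) (es : 'I_L -> CV M),
    injective ns /\ injective es /\ (forall i, P (ns i)) /\
    forall i, joins (es i) (ns i) (ns (ordS i)).

Definition no_short_cycle (l : nat) : Prop :=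
  ~ exists L, (L <= l)%N /\ cycle_in L (fun _ => True).

Definition ball_cyclic (v : node M) (k : nat) : Prop :=
  exists L, cycle_in L (fun u => within k v u).

Definition deg (u : node M) : nat :=
  match u with inl x => dV x | inr a => dF a end.

Definition step (u : node M) (i : nat) : option (node M * option nat) :=
  match u with
  | inl x => omap (fun c : CV M => (inr (tag (G c)), Some (nat_of_ord (tagged (G c)))))
               [pick c : CV M | (tag c == x) && (tagged c == i :> nat)]
  | inr a => omap (fun c : CV M => (inl (tag c), Some (nat_of_ord (tagged c))))
               [pick c : CV M | (tag (G c) == a) && (tagged (G c) == i :> nat)]
  end.

Definition walk (v : node M) (s : seq nat) : option (node M * option nat) :=
  foldl (fun o i => obind (fun p : node M * option nat =>
           if (i < deg p.1)%N && (Some i != p.2) then step p.1 i else None) o)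
        (Some (v, None)) s.

Definition node_label (u : node M) (up : option nat) : label Theta PsiI :=
  match u with
  | inl x => ([seq tV x j | j <- iota 0 (dV x)], None, up)
  | inr a => ([seq tF a j | j <- iota 0 (dF a)], Some (wF a), up)
  end.

Definition unfold (v : node M) (k : nat) : templ Theta PsiI := fun s =>
  if (size s <= k)%N then omap (fun p => node_label p.1 p.2) (walk v s) else None.

(* the class of \partial^k[G,v]; None stands for any non-acyclic class *)
Definition nbhd (v : node M) (k : nat) : option (templ Theta PsiI) :=
  if `[< ball_cyclic v k >] then None else Some (unfold v k).

Definition matched (x : 'I_(nV M)) (i : nat) (a : 'I_(nF M)) (j : nat) : bool :=
  [exists c : CV M, [&& (tag c) == x, (tagged c) == i :> nat,
                        (tag (G c)) == a & (tagged (G c)) == j :> nat]].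

End Graph.

Definition ball_iso (M : model) (G G' : {ffun CV M -> CF M}) (v : node M) (k : nat) : Prop :=
  exists (fV : 'I_(nV M) -> 'I_(nV M)) (fF : 'I_(nF M) -> 'I_(nF M)),
    let f (u : node M) : node M :=
      match u with inl x => inl (fV x) | inr a => inr (fF a) end in
    f v = v /\
    (forall u, within G k v u -> within G' k v (f u)) /\
    (forall u u', within G k v u -> within G k v u' -> f u = f u' -> u = u') /\
    (forall u', within G' k v u' -> exists u, within G k v u /\ f u = u') /\
    (forall x, within G k v (inl x) ->
       dV (fV x) = dV x /\ forall j, (j < dV x)%N -> tV (fV x) j = tV x j) /\
    (forall a, within G k v (inr a) ->
       [/\ dF (fF a) = dF a, wF (fF a) = wF a &
           forall j, (j < dF a)%N -> tF (fF a) j = tF a j]) /\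
    (forall x a i j, within G k v (inl x) -> within G k v (inr a) ->
       matched G x i a j = matched G' (fV x) i (fF a) j).

Definition iso_l (M : model) (G G' : {ffun CV M -> CF M}) (l : nat) : Prop :=
  (forall x, ball_iso G G' (inl x) l) /\ (forall a, ball_iso G G' (inr a) l.+1).

End Models.

Section Gibbs.
Variables (R : realType) (Delta : nat) (Omega Theta PsiI : finType).
Variables (psi : PsiI -> seq Omega -> R).

Definition tv (T : finType) (p q : T -> R) : R := 2^-1 * \sum_t `|p t - q t|.

Definition is_distr (T : finType) (q : T -> R) : Prop :=
  (forall t, 0 <= q t) /\ \sum_t q t = 1.

Section OnModel.
Variables (M : model Theta PsiI) (G : {ffun CV M -> CF M}).

Definition config := {ffun 'I_(nV M) -> Omega}.

Definition partner (a : 'I_(nF M)) (j : nat) : option 'I_(nV M) :=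
  omap (fun c : CV M => (tag c))
    [pick c : CV M | (tag (G c) == a) && (tagged (G c) == j :> nat)].

Definition weight (sg : config) : R :=
  \prod_(a : 'I_(nF M)) psi (wF a) [seq sg y | y <- pmap (partner a) (iota 0 (dF a))].

Definition Zpart : R := \sum_(sg : config) weight sg.

Definition gibbs (sg : config) : R := weight sg / Zpart.

Definition marg (x : 'I_(nV M)) (w : Omega) : R :=
  \sum_(sg : config | sg x == w) gibbs sg.

Definition marg2 (x y : 'I_(nV M)) (w : Omega * Omega) : R :=
  \sum_(sg : config | (sg x == w.1) && (sg y == w.2)) gibbs sg.

Definition symmetric2 (eps : R) : Prop :=
  (nV M)%:R ^- 2 * \sum_(x : 'I_(nV M)) \sum_(y : 'I_(nV M))
     tv (marg2 x y) (fun w => marg x w.1 * marg y w.2) < eps.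

Definition boundary (x : 'I_(nV M)) (l : nat) (y : 'I_(nV M)) : bool :=
  within G l.+1 (inl x) (inl y) && ~~ within G l.-1 (inl x) (inl y).

(* <sigma[w|x] | nabla_l(G,x)>_{mu_G} evaluated at the configuration sg *)
Definition cond_marg (x : 'I_(nV M)) (l : nat) (sg : config) (w : Omega) : R :=
  let agree (tau : config) := [forall y, boundary x l y ==> (tau y == sg y)] in
  (\sum_(tau : config | agree tau && (tau x == w)) gibbs tau) /
  (\sum_(tau : config | agree tau) gibbs tau).

End OnModel.

Definition avgG (M : model Theta PsiI) (f : {ffun CV M -> CF M} -> R) : R :=
  (\sum_(G in fgraphs M) f G) / #|fgraphs M|%:R.

Definition planted_prob (M : model Theta PsiI) (l : nat) (G : {ffun CV M -> CF M}) : R :=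
  let cls := [set G' in fgraphs M | `[< iso_l G G' l >]] in
  Zpart G / (#|fgraphs M|%:R * ((\sum_(G' in cls) Zpart G') / #|cls|%:R)).

Definition high_girth (Ms : nat -> model Theta PsiI) : Prop :=
  forall l lc : nat, (0 < l)%N -> (0 < lc)%N ->
    0 < limn_inf (fun n => avgG (M := Ms n) (fun G => if `[< no_short_cycle G lc >] then 1 else 0)) /\
    0 < limn_inf (fun n => \sum_(G in fgraphs (Ms n) | `[< no_short_cycle G lc >])
                             planted_prob l G).

End Gibbs.

Section Limits.
Variables (R : realType) (Delta : nat) (Omega Theta PsiI : finType).
Variables (ar : PsiI -> nat) (psi : PsiI -> seq Omega -> R).

Local Notation TTy := (TT Theta PsiI).

Definition lambdaG (M : model Theta PsiI) (G : {ffun CV M -> CF M}) (l : nat)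
    (A : set (option (templ Theta PsiI))) : R :=
  (\sum_(x : 'I_(nV M)) (\1_A (nbhd G (inl x) l) : R) +
   \sum_(a : 'I_(nF M)) (\1_A (nbhd G (inr a) l.+1) : R)) / (nV M + nF M)%:R.

Definition theta_l (th : probability TTy R) (l : nat)
    (A : set (option (templ Theta PsiI))) : R :=
  fine (th [set T : TTy | A (Some (trunc_for l T))]).

Definition tv_local (th : probability TTy R) (l : nat)
    (M : model Theta PsiI) (G : {ffun CV M -> CF M}) : R :=
  sup (range (fun A => `|lambdaG G l A - theta_l th l A|)).

Definition local_conv (Ms : nat -> model Theta PsiI) (th : probability TTy R) : Prop :=
  forall l, (0 < l)%N ->
    (fun n => avgG (tv_local th l (M := Ms n)) : R^o) @ \oo --> (0 : R^o).

Definition ent_obj (d : nat) (k : PsiI) (q : d.-tuple Omega -> R) : R :=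
  \sum_s (- (q s * ln (q s))) + \sum_s q s * ln (psi k s).

Definition tmarg (d : nat) (q : d.-tuple Omega -> R) (j : 'I_d) (w : Omega) : R :=
  \sum_(s : d.-tuple Omega | tnth s j == w) q s.

(* p = (pV, pF): pV T = p_T for T in V, pF T restricted to (d_T)-tuples = p_T
   for T in F *)
Definition marg_assign (pV : TTy -> Omega -> R) (pF : TTy -> seq Omega -> R) : Prop :=
  [/\ (forall w, measurable_fun setT (fun T : TTy => pV T w)),
      (forall s, measurable_fun setT (fun T : TTy => pF T s)),
      (forall T : TTy, wf_templ Delta ar T -> root_is_var T -> is_distr (pV T)) &
      (forall (T : TTy) ts k, wf_templ Delta ar T -> T [::] = Some (ts, Some k, None) ->
         let q := fun s : (size ts).-tuple Omega => pF T s in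
         [/\ is_distr q,
             (forall j w, tmarg q j w = pV (reroot T j) w) &
             (forall nu : (size ts).-tuple Omega -> R, is_distr nu ->
                (forall j w, tmarg nu j w = pV (reroot T j) w) ->
                ent_obj k nu <= ent_obj k q)])].

(* p_{l,T}; uniform for non-acyclic T (None) and, by convention, when the
   conditioning event has probability zero *)
Definition p_l (th : probability TTy R) (pV : TTy -> Omega -> R) (l : nat)
    (oT : option (templ Theta PsiI)) (w : Omega) : R :=
  match oT with
  | Some T =>
      let E := [set T' : TTy | trunc l T' = T] in
      if 0 < fine (th E)
      then fine (\int[th]_(t in E) (pV t w)%:E) / fine (th E)
      else #|Omega|%:R^-1
  | None => #|Omega|%:R^-1
  end.

Definition psi_ok : Prop :=
  (forall k, (0 < ar k <= Delta)%N) /\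
  (forall k s, size s = ar k -> 0 < psi k s) /\
  (forall k k', ar k = ar k' -> (forall s, size s = ar k -> psi k s = psi k' s) -> k = k').

End Limits.

From Pilot Require Import Defs.
From HB Require Import structures.
From mathcomp Require Import all_boot all_order all_algebra.
From mathcomp Require Import all_classical all_reals all_analysis.
From mathcomp Require Import ring lra.

Set Implicit Arguments.
Unset Strict Implicit.
Unset Printing Implicit Defensive.

Import Order.TTheory GRing.Theory Num.Theory.
Local Open Scope ring_scope.

(* Given the spins at distance [l] and [l+1] from [x], the inside of that shell and
   its outside interact only through the conditioned spins, so [sigma(x)] is then
   independent of every [sigma(y)] with [y] farther than [l+1] from [x].  Averaging
   the conditional law of [sigma(x)] gives its marginal, so [TV(mu_x, p_x)] is at
   most the mean conditional error at [x]; for far [y] the joint law of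
   [(sigma(x), sigma(y))] is a mixture of products and lies within twice that error
   of the product of the marginals.  The remaining pairs number at most
   [n (Delta+1)^(l+1) = o(n^2)]. *)

Section Neighbourhoods.
Variables (Theta PsiI : finType) (M : model Theta PsiI) (G : {ffun CV M -> CF M}).

Lemma within_refl k u : Defs.within G k u u.
Proof. by elim: k => [|k IH] /=; rewrite ?eqxx ?IH. Qed.

Lemma within_mono k k' u v :
  (k <= k')%N -> Defs.within G k u v -> Defs.within G k' u v.
Proof.
elim: k' => [|k' IH]; first by rewrite leqn0 => /eqP ->.
by rewrite leq_eqVlt => /orP [/eqP -> //|/IH hk /hk /= ->].
Qed.

Lemma within_step k u w v :
  Defs.within G k u w -> adj G w v -> Defs.within G k.+1 u v.
Proof. by move=> uw wv /=; apply/orP; right; apply/existsP; exists w; rewrite uw. Qed.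

Lemma card_tag_le (I : finType) (T_ : I -> finType) (i : I) :
  (#|[set c : {i : I & T_ i} | tag c == i]| <= #|T_ i|)%N.
Proof.
rewrite -cardsT; apply: leq_trans (leq_imset_card (Tagged T_) _).
apply/subset_leq_card/fintype.subsetP => -[i' t]; rewrite inE /= => /eqP ei.
by subst i'; apply/imsetP; exists t; rewrite ?inE.
Qed.

Lemma card_adj_le_deg w : injective G -> (#|[set v | adj G w v]| <= deg w)%N.
Proof.
move=> G_inj; case: w => [x|a] /=.
- apply: (@leq_trans #|[set inr (tag (G c)) | c in [set c : CV M | tag c == x]]
                      : {set node M}|).
    apply/subset_leq_card/fintype.subsetP => v; rewrite inE => /existsP [c].
    rewrite /joins => /orP [/andP [/eqP [xc] /eqP ->]|/andP [_ /eqP //]].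
    by apply/imsetP; exists c; rewrite ?inE ?xc.
  apply: leq_trans (leq_imset_card _ _) _.
  by rewrite -[X in (_ <= X)%N]card_ord; exact: card_tag_le.
- apply: (@leq_trans #|[set inl (tag c) | c in [set c : CV M | tag (G c) == a]]
                      : {set node M}|).
    apply/subset_leq_card/fintype.subsetP => v; rewrite inE => /existsP [c].
    rewrite /joins => /orP [/andP [/eqP //]|/andP [/eqP -> /eqP [ea]]].
    by apply/imsetP; exists c; rewrite ?inE ?ea.
  apply: leq_trans (leq_imset_card _ _) _.
  rewrite -(card_imset _ G_inj) -[X in (_ <= X)%N]card_ord.
  apply: (leq_trans _ (card_tag_le (fun a => 'I_(dF a)) a)).
  apply/subset_leq_card/fintype.subsetP => b /imsetP [c]; rewrite !inE => ca ->.
  exact: ca.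
Qed.

Lemma card_ball_le D u k : (forall w, #|[set v | adj G w v]| <= D)%N ->
  (#|[set v | Defs.within G k u v]| <= D.+1 ^ k)%N.
Proof.
move=> adj_le; elim: k => [|k IH].
  rewrite expn0 -(cards1 u); apply/subset_leq_card/fintype.subsetP => v.
  by rewrite !inE eq_sym.
set B := [set v | Defs.within G k u v].
have ball_sub : [set v | Defs.within G k.+1 u v] \subset
                B :|: \bigcup_(w in B) [set v | adj G w v].
  apply/fintype.subsetP => v; rewrite !inE /= => /orP [->//|/existsP [w /andP [uw wv]]].
  by apply/orP; right; apply/bigcupP; exists w; rewrite ?inE.
apply: leq_trans (subset_leq_card ball_sub) _.
apply: leq_trans (leq_card_setU _ _) _.
rewrite expnS mulSn leq_add //.
apply: (@leq_trans (\sum_(w in B) D)); last first.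
  by rewrite sum_nat_const mulnC leq_mul2l IH orbT.
apply: (big_ind2 (fun (A : {set node M}) m => #|A| <= m)%N) => [|A1 m1 A2 m2 h1 h2|w _].
- by rewrite cards0.
- exact: leq_trans (leq_card_setU _ _) (leq_add h1 h2).
- exact: adj_le.
Qed.

Lemma card_ball_var_le D x k : (forall w, #|[set v | adj G w v]| <= D)%N ->
  (#|[set y | Defs.within G k (inl x) (inl y)]| <= D.+1 ^ k)%N.
Proof.
move=> /(card_ball_le (inl x) k); apply: leq_trans.
rewrite -(card_imset _ (@inl_inj 'I_(nV M) 'I_(nF M))).
by apply/subset_leq_card/fintype.subsetP => v /imsetP [y]; rewrite !inE => xy ->.
Qed.

Lemma card_adj_le Delta ar : model_ok Delta ar M -> G \in fgraphs M ->
  forall w, (#|[set v | adj G w v]| <= Delta)%N.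
Proof.
move=> [dV_le [dF_le _]]; rewrite inE => /and3P [/injectiveP G_inj _ _] w.
apply: leq_trans (card_adj_le_deg w G_inj) _.
by case: w => [x|a] /=; [case/andP: (dV_le x) | case/andP: (dF_le a)].
Qed.

End Neighbourhoods.

Section Distributions.
Variable R : realType.

Lemma sum_indicator1 (T : finType) (c : T) : \sum_t ((c == t)%:R : R) = 1.
Proof.
rewrite (bigD1 c) //= eqxx big1 ?addr0 // => t ct.
by rewrite eq_sym (negbTE ct).
Qed.

Lemma tv_le1 (T : finType) (P Q : T -> R) : is_distr P -> is_distr Q -> tv P Q <= 1.
Proof.
move=> [P_ge0 sumP] [Q_ge0 sumQ]; rewrite /tv.
apply: (le_trans (y := 2^-1 * \sum_t (P t + Q t))).
  rewrite ler_wpM2l ?invr_ge0 //; apply: ler_sum => t _.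
  by apply: le_trans (ler_normB _ _) _; rewrite !ger0_norm.
by rewrite big_split /= sumP sumQ mulVf ?pnatr_eq0.
Qed.

Lemma prod_distr (A B : finType) (P : A -> R) (Q : B -> R) :
  is_distr P -> is_distr Q -> is_distr (fun w : A * B => P w.1 * Q w.2).
Proof.
move=> [P_ge0 sumP] [Q_ge0 sumQ]; split=> [w|]; first exact: mulr_ge0.
rewrite -(pair_bigA _ (fun a b => P a * Q b)) /=.
by under eq_bigr do rewrite -mulr_sumr sumQ mulr1.
Qed.

Lemma sum_cond_indicator (S T : finType) (g : S -> R) (f : S -> T) t :
  \sum_(s | f s == t) g s = \sum_s g s * (f s == t)%:R.
Proof. by rewrite big_mkcond; apply: eq_bigr => s _; case: eqP; rewrite ?mulr1 ?mulr0. Qed.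

End Distributions.

Section Mixtures.
Variables (R : realType) (S A : finType) (g : S -> R).
Hypothesis g_ge0 : forall s, 0 <= g s.

Lemma sum_norm_mix_le (T : finType) (h : S -> T -> R) :
  \sum_t `|\sum_s g s * h s t| <= \sum_s g s * \sum_t `|h s t|.
Proof.
under [X in _ <= X]eq_bigr do rewrite mulr_sumr.
rewrite [X in _ <= X]exchange_big /=.
apply: ler_sum => t _; apply: le_trans (ler_norm_sum _ _ _) _.
by apply: ler_sum => s _; rewrite normrM ger0_norm.
Qed.

Hypothesis sum_g : \sum_s g s = 1.

Lemma law_distr (T : finType) (f : S -> T) :
  is_distr (fun t => \sum_s g s * (f s == t)%:R).
Proof.
split=> [t|]; first by apply: sumr_ge0 => s _; rewrite mulr_ge0.
rewrite exchange_big /= -[RHS]sum_g; apply: eq_bigr => s _.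
by rewrite -mulr_sumr sum_indicator1 mulr1.
Qed.

Lemma mix_subr (q : S -> A -> R) (p : A -> R) a :
  \sum_s g s * q s a - p a = \sum_s g s * (q s a - p a).
Proof.
under [RHS]eq_bigr do rewrite mulrBr.
by rewrite sumrB -mulr_suml sum_g mul1r.
Qed.

Lemma tv_mix_le (q : S -> A -> R) (p : A -> R) :
  tv (fun a => \sum_s g s * q s a) p <= \sum_s g s * tv (q s) p.
Proof.
rewrite /tv; under eq_bigr do rewrite mix_subr.
under [X in _ <= X]eq_bigr do rewrite mulrCA.
by rewrite -mulr_sumr ler_wpM2l ?invr_ge0 // sum_norm_mix_le.
Qed.

(* With [D s a := q s a - p a] and [mB] the law of [Y], the joint law minus the
   product of its marginals is [sum_s g s (Y s == b) D s a - mB b sum_s g s D s a],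
   and each of the two terms has l1-norm at most [sum_s g s sum_a |D s a|]. *)
Lemma tv_mix_pair_le (B : finType) (Y : S -> B) (q : S -> A -> R) (p : A -> R) :
  tv (fun w : A * B => \sum_s g s * ((Y s == w.2)%:R * q s w.1))
     (fun w => (\sum_s g s * q s w.1) * \sum_s g s * (Y s == w.2)%:R)
  <= 2 * \sum_s g s * tv (q s) p.
Proof.
pose mB b := \sum_s g s * (Y s == b)%:R.
pose D s a := q s a - p a.
have [mB_ge0 sum_mB] : is_distr mB := law_distr Y.
have defect a b : \sum_s g s * ((Y s == b)%:R * q s a) - (\sum_s g s * q s a) * mB b =
    \sum_s g s * ((Y s == b)%:R * D s a) - mB b * \sum_s g s * D s a.
  have -> : \sum_s g s * ((Y s == b)%:R * D s a) =
            \sum_s g s * ((Y s == b)%:R * q s a) - p a * mB b.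
    by rewrite /mB mulr_sumr -sumrB; apply: eq_bigr => s _; rewrite /D; ring.
  rewrite -mix_subr; ring.
have row_le a : \sum_b `|\sum_s g s * ((Y s == b)%:R * q s a) -
                        (\sum_s g s * q s a) * mB b|
                <= 2 * \sum_s g s * `|D s a|.
  under eq_bigr do rewrite defect.
  apply: (le_trans (y := \sum_b (`|\sum_s g s * ((Y s == b)%:R * D s a)| +
                               mB b * `|\sum_s g s * D s a|))).
    apply: ler_sum => b _; apply: le_trans (ler_normB _ _) _.
    by rewrite normrM (ger0_norm (mB_ge0 b)).
  rewrite big_split /= -mulr_suml sum_mB mul1r mulr2n mulrDl mul1r.
  apply: lerD.
    apply: le_trans (sum_norm_mix_le (fun s b => (Y s == b)%:R * D s a)) _.
    apply: ler_sum => s _; rewrite ler_wpM2l //.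
    under eq_bigr do rewrite normrM ger0_norm ?ler0n //.
    by rewrite -mulr_suml sum_indicator1 mul1r.
  apply: le_trans (ler_norm_sum _ _ _) _; apply: ler_sum => s _.
  by rewrite normrM ger0_norm.
rewrite /tv -(pair_bigA _ (fun a b => `|\sum_s g s * ((Y s == b)%:R * q s a) -
                                          (\sum_s g s * q s a) * mB b|)) /=.
apply: le_trans (ler_wpM2l _ (ler_sum _ (fun a _ => row_le a))) _.
  by rewrite invr_ge0.
have -> : 2^-1 * \sum_a (2 * \sum_s g s * `|D s a|) = \sum_s g s * \sum_a `|D s a|.
  rewrite -mulr_sumr mulrA mulVf ?pnatr_eq0 // mul1r exchange_big /=.
  by apply: eq_bigr => s _; rewrite mulr_sumr.
by rewrite mulr_sumr; apply: ler_sum => s _; rewrite /tv mulrCA mulVKf ?pnatr_eq0.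
Qed.

End Mixtures.


Section PositiveGibbs.
Variables (R : realType) (Delta : nat) (Omega Theta PsiI : finType) (ar : PsiI -> nat)
  (psi : PsiI -> seq Omega -> R) (M : model Theta PsiI) (G : {ffun CV M -> CF M}).
Hypotheses (hM : model_ok Delta ar M) (hG : G \in fgraphs M).
Hypothesis psi_gt0 : forall k s, size s = ar k -> 0 < psi k s.
Hypothesis Omega_gt0 : (0 < #|Omega|)%N.

Lemma partner_neq_None a j : (j < dF a)%N -> partner G a j != None.
Proof.
move=> ja; move: hG; rewrite inE => /and3P [_ /forallP G_onto _].
have /existsP [c /eqP Gc] :=
  G_onto (@existT _ (fun a0 : 'I_(nF M) => 'I_(dF a0)) a (Ordinal ja)).
rewrite /partner; case: pickP => [//|none].
by have := none c; rewrite Gc /= !eqxx.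
Qed.

Lemma size_partners a : size (pmap (partner G a) (iota 0 (dF a))) = dF a.
Proof.
rewrite size_pmap -[RHS](size_iota 0) -count_predT.
apply: eq_in_count => j; rewrite mem_iota add0n /= => ja.
by have := partner_neq_None ja; case: (partner G a j).
Qed.

Lemma weight_gt0 sg : 0 < weight psi G sg.
Proof.
apply: prodr_gt0 => a _; apply: psi_gt0.
by rewrite size_map size_partners; case: hM => _ [_ []].
Qed.

Lemma Zpart_gt0 : 0 < Zpart psi G.
Proof.
have [w0 _] := card_gt0P Omega_gt0.
rewrite /Zpart (bigD1 [ffun=> w0]) //= ltr_wpDr ?weight_gt0 //.
by apply: sumr_ge0 => sg _; apply/ltW/weight_gt0.
Qed.

Lemma gibbs_gt0 sg : 0 < gibbs psi G sg.
Proof. by rewrite divr_gt0 ?weight_gt0 ?Zpart_gt0. Qed.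

Lemma sum_gibbs : \sum_sg gibbs psi G sg = 1.
Proof. by rewrite -mulr_suml mulfV // lt0r_neq0 ?Zpart_gt0. Qed.

End PositiveGibbs.

Section Conditioning.
Variables (R : realType) (Omega Theta PsiI : finType) (psi : PsiI -> seq Omega -> R)
  (M : model Theta PsiI) (G : {ffun CV M -> CF M}).
Hypothesis mu_gt0 : forall sg, 0 < gibbs psi G sg.
Hypothesis mu_sum1 : \sum_sg gibbs psi G sg = 1.

Local Notation mu := (gibbs psi G).
Local Notation config := (config Omega M).

Lemma mu_ge0 sg : 0 <= mu sg.
Proof. exact/ltW/mu_gt0. Qed.

Lemma margE z b : marg psi G z b = \sum_sg mu sg * (sg z == b)%:R.
Proof. exact: sum_cond_indicator. Qed.

Lemma marg2E z z' w : marg2 psi G z z' w = \sum_sg mu sg * ((sg z, sg z') == w)%:R.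
Proof. by case: w => a b; rewrite -sum_cond_indicator. Qed.

Lemma marg_distr z : is_distr (marg psi G z).
Proof.
have := law_distr mu_ge0 mu_sum1 (fun sg : config => sg z).
by congr is_distr; apply/funext => b; rewrite margE.
Qed.

Lemma marg2_distr z z' : is_distr (marg2 psi G z z').
Proof.
have := law_distr mu_ge0 mu_sum1 (fun sg : config => (sg z, sg z')).
by congr is_distr; apply/funext => w; rewrite marg2E.
Qed.

Section Boundary.
Variables (x : 'I_(nV M)) (l : nat).

Definition agree (sg tau : config) := [forall y, boundary G x l y ==> (tau y == sg y)].

Lemma agree_refl sg : agree sg sg.
Proof. by apply/forallP => y; rewrite eqxx implybT. Qed.

Lemma agree_sym s t : agree s t = agree t s.
Proof. by apply: eq_forallb => y; rewrite eq_sym. Qed.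

Lemma agree_trans s t : agree s t -> agree s =1 agree t.
Proof.
move=> /forallP st u; apply: eq_forallb => y.
by have := st y; case: (boundary G x l y) => //= /eqP ->.
Qed.

Definition class_mass sg := \sum_(tau | agree sg tau) mu tau.

Lemma class_mass_gt0 sg : 0 < class_mass sg.
Proof.
rewrite /class_mass (bigD1 sg) ?agree_refl //= ltr_wpDr ?mu_gt0 //.
by apply: sumr_ge0 => tau _; apply: mu_ge0.
Qed.

Lemma class_mass_agree s t : agree s t -> class_mass s = class_mass t.
Proof. by move=> st; apply: eq_bigl; apply: agree_trans. Qed.

Lemma cond_margE sg w : cond_marg psi G x l sg w =
  (\sum_(tau | agree sg tau && (tau x == w)) mu tau) / class_mass sg.
Proof. by []. Qed.

Lemma cond_marg_agree s t w : agree s t -> cond_marg psi G x l t w = cond_marg psi G x l s w.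
Proof.
move=> st; rewrite !cond_margE (class_mass_agree st).
by congr (_ / _); apply: eq_bigl => u; rewrite (agree_trans st).
Qed.

(* For fixed [t], the weights [mu sg / class_mass sg] over the class of [t] sum to [1]. *)
Lemma sum_by_class (k : config -> R) :
  \sum_t k t = \sum_sg mu sg / class_mass sg * \sum_(t | agree sg t) k t.
Proof.
under [RHS]eq_bigr do rewrite mulr_sumr.
rewrite (exchange_big_dep predT) //=; apply: eq_bigr => t _.
rewrite -mulr_suml -[LHS]mul1r; congr (_ * _); symmetry.
rewrite (eq_bigr (fun s => mu s / class_mass t)) => [|s st]; last first.
  by rewrite (class_mass_agree st).
rewrite -mulr_suml (eq_bigl (agree t)) => [|s]; last by rewrite agree_sym.
by rewrite mulfV // lt0r_neq0 ?class_mass_gt0.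
Qed.

Lemma marg_mix w : marg psi G x w = \sum_sg mu sg * cond_marg psi G x l sg w.
Proof.
rewrite /marg big_mkcond sum_by_class; apply: eq_bigr => sg _.
by rewrite cond_margE -big_mkcondr mulrAC -mulrA.
Qed.

Hypothesis l_gt0 : (0 < l)%N.

Definition interior (z : 'I_(nV M)) := Defs.within G l.-1 (inl x) (inl z).

Definition splice (t1 t2 : config) : config :=
  [ffun z => if interior z then t1 z else t2 z].

Definition factor_vars a := pmap (partner G a) (iota 0 (dF a)).

Definition factor_val a (t : config) := psi (wF a) [seq t y | y <- factor_vars a].

Lemma factor_val_eq a (t t' : config) : {in factor_vars a, t =1 t'} ->
  factor_val a t = factor_val a t'.
Proof. by move=> tt'; rewrite /factor_val; congr psi; apply/eq_in_map. Qed.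

Lemma partner_adj a j z : partner G a j = Some z ->
  adj G (inl z) (inr a) && adj G (inr a) (inl z).
Proof.
rewrite /partner; case: pickP => [c /andP [/eqP Gca _]|//] [<-].
by apply/andP; split; apply/existsP; exists c; rewrite /joins Gca !eqxx ?orbT.
Qed.

Lemma factor_vars_within a z0 z : z0 \in factor_vars a -> interior z0 ->
  z \in factor_vars a -> Defs.within G l.+1 (inl x) (inl z).
Proof.
rewrite !mem_pmap => /mapP [j0 _ /esym/partner_adj/andP [z0a _]] xz0.
move=> /mapP [j _ /esym/partner_adj/andP [_ az]].
by have := within_step (within_step xz0 z0a) az; rewrite prednK.
Qed.

(* A factor meeting the interior sees only interior and boundary variables, on
   which [splice t1 t2] agrees with [t1]; any other factor sees only exterior
   variables, on which the two splices exchange [t1] and [t2]. *)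
Lemma factor_val_splice a t1 t2 : agree t1 t2 ->
  factor_val a t1 * factor_val a t2 =
  factor_val a (splice t1 t2) * factor_val a (splice t2 t1).
Proof.
move=> /forallP t12.
have [/hasP [z0 az0 xz0]|/hasPn no_int] := boolP (has interior (factor_vars a)).
  have t21 : {in factor_vars a, forall z, ~~ interior z -> t2 z = t1 z}.
    move=> z az zext; apply/eqP; have := t12 z.
    by rewrite /boundary (factor_vars_within az0 xz0 az) zext.
  rewrite (@factor_val_eq a (splice t1 t2) t1) => [|z az]; last first.
    by rewrite ffunE; case: ifPn => // /(t21 z az) ->.
  rewrite (@factor_val_eq a (splice t2 t1) t2) // => z az.
  by rewrite ffunE; case: ifPn => // /(t21 z az) ->.
rewrite mulrC (@factor_val_eq a (splice t1 t2) t2) => [|z az]; last first.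
  by rewrite ffunE (negbTE (no_int z az)).
rewrite (@factor_val_eq a (splice t2 t1) t1) // => z az.
by rewrite ffunE (negbTE (no_int z az)).
Qed.

Lemma gibbs_splice t1 t2 : agree t1 t2 ->
  mu t1 * mu t2 = mu (splice t1 t2) * mu (splice t2 t1).
Proof.
move=> t12; rewrite /gibbs mulrACA [RHS]mulrACA; congr (_ * _).
by rewrite /weight -!big_split /=; apply: eq_bigr => a _; apply: factor_val_splice.
Qed.

Lemma agree_splice s t1 t2 : agree s (splice t1 t2) = agree s t2.
Proof.
apply: eq_forallb => y; case ybd: (boundary G x l y) => //=.
by move: ybd; rewrite /boundary ffunE /interior => /andP [_ /negbTE ->].
Qed.

Lemma spliceK t1 t2 : splice (splice t1 t2) (splice t2 t1) = t1.
Proof. by apply/ffunP => z; rewrite !ffunE; case: (interior z). Qed.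

Lemma splice_root t1 t2 : splice t1 t2 x = t1 x.
Proof. by rewrite ffunE /interior within_refl. Qed.

Lemma splice_far t1 t2 y : ~~ Defs.within G l.+1 (inl x) (inl y) ->
  splice t1 t2 y = t2 y.
Proof.
move=> far; rewrite ffunE; case: ifP => // xy.
have : Defs.within G l.+1 (inl x) (inl y).
  exact: within_mono (leq_trans (leq_pred l) (leqnSn l)) xy.
by rewrite (negbTE far).
Qed.

Lemma splice_pair_inj :
  injective (fun t : config * config => (splice t.1 t.2, splice t.2 t.1)).
Proof.
apply: (can_inj (g := fun t => (splice t.1 t.2, splice t.2 t.1))) => -[t1 t2].
by rewrite /= !spliceK.
Qed.

(* The involution [(t1, t2) |-> (splice t1 t2, splice t2 t1)] on
   pairs agreeing on the boundary preserves [mu t1 * mu t2] and carries the value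
   at [x] from the first configuration to the second while fixing the value at [y]. *)
Lemma cond_indep_far sg y a b : ~~ Defs.within G l.+1 (inl x) (inl y) ->
  (\sum_(t | agree sg t && (t x == a) && (t y == b)) mu t) * class_mass sg =
  (\sum_(t | agree sg t && (t x == a)) mu t) * (\sum_(t | agree sg t && (t y == b)) mu t).
Proof.
move=> far; rewrite /class_mass !big_distrlr /= !pair_big /=.
rewrite [RHS](reindex_inj splice_pair_inj) /= big_mkcond [RHS]big_mkcond.
apply: eq_bigr => -[t1 t2] _ /=; rewrite !agree_splice splice_root splice_far //.
case A1: (agree sg t1); case A2: (agree sg t2); rewrite /= ?andbF //.
case: (t1 x == a); case: (t1 y == b) => //=.
by apply: gibbs_splice; rewrite -(agree_trans A1).
Qed.

Lemma marg2_mix y w : ~~ Defs.within G l.+1 (inl x) (inl y) ->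
  marg2 psi G x y w = \sum_sg mu sg * ((sg y == w.2)%:R * cond_marg psi G x l sg w.1).
Proof.
move=> far; case: w => a b /=.
rewrite /marg2 /= big_mkcond sum_by_class.
rewrite [RHS](sum_by_class (fun sg => mu sg * ((sg y == b)%:R * cond_marg psi G x l sg a))).
apply: eq_bigr => sg _; congr (_ * _); rewrite -big_mkcondr /=.
under [RHS]eq_bigr => t st do rewrite (cond_marg_agree _ st) mulrCA mulrA.
rewrite -[in RHS]mulr_suml; apply: (mulIf (lt0r_neq0 (class_mass_gt0 sg))).
rewrite (eq_bigl (fun t => agree sg t && (t x == a) && (t y == b))) => [|t]; last first.
  by rewrite andbA.
rewrite cond_indep_far // cond_margE -mulrA mulfVK ?lt0r_neq0 ?class_mass_gt0 // mulrC.
congr (_ * _); rewrite [LHS]big_mkcondr /=; apply: eq_bigr => t _.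
by case: (t y == b); rewrite ?mul1r ?mul0r.
Qed.

Variable p : Omega -> R.

Definition avg_cond_tv := \sum_sg mu sg * tv (cond_marg psi G x l sg) p.

Lemma avg_cond_tv_ge0 : 0 <= avg_cond_tv.
Proof.
apply: sumr_ge0 => sg _; rewrite mulr_ge0 ?mu_ge0 // mulr_ge0 ?invr_ge0 //.
by apply: sumr_ge0.
Qed.

Lemma tv_marg_le : tv (marg psi G x) p <= avg_cond_tv.
Proof.
have -> : marg psi G x = fun w => \sum_sg mu sg * cond_marg psi G x l sg w.
  by apply/funext => w; apply: marg_mix.
exact: tv_mix_le mu_ge0 mu_sum1 _ _.
Qed.

Lemma tv_marg2_le y :
  tv (marg2 psi G x y) (fun w => marg psi G x w.1 * marg psi G y w.2)
  <= (Defs.within G l.+1 (inl x) (inl y))%:R + 2 * avg_cond_tv.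
Proof.
have [near|far] := boolP (Defs.within G l.+1 (inl x) (inl y)).
  apply: le_trans (tv_le1 (marg2_distr x y) (prod_distr (marg_distr x) (marg_distr y))) _.
  by rewrite lerDl mulr_ge0 ?avg_cond_tv_ge0.
rewrite add0r.
have -> : marg2 psi G x y =
    fun w => \sum_sg mu sg * ((sg y == w.2)%:R * cond_marg psi G x l sg w.1).
  by apply/funext => w; apply: marg2_mix.
have -> : (fun w : Omega * Omega => marg psi G x w.1 * marg psi G y w.2) =
    fun w => (\sum_sg mu sg * cond_marg psi G x l sg w.1) * \sum_sg mu sg * (sg y == w.2)%:R.
  by apply/funext => w; rewrite marg_mix margE.
exact: (tv_mix_pair_le mu_ge0 mu_sum1 (fun sg : config => sg y) _ p).
Qed.

End Boundary.

Lemma sum_tv_marg2_le D l (p : 'I_(nV M) -> Omega -> R) : (0 < l)%N ->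
  (forall w, #|[set v | adj G w v]| <= D)%N ->
  \sum_x \sum_y tv (marg2 psi G x y) (fun w => marg psi G x w.1 * marg psi G y w.2)
  <= (nV M)%:R * ((D.+1 ^ l.+1)%:R + 2 * \sum_x avg_cond_tv x l (p x)).
Proof.
move=> l_gt0 adj_le.
apply: (le_trans (y := \sum_x ((D.+1 ^ l.+1)%:R + (nV M)%:R * (2 * avg_cond_tv x l (p x))))).
  apply: ler_sum => x _.
  apply: le_trans (ler_sum _ (fun y _ => tv_marg2_le x l_gt0 (p x) y)) _.
  rewrite big_split sumr_const card_ord -[_ *+ nV M]mulr_natl lerD2r -natr_sum ler_nat.
  apply: leq_trans (card_ball_var_le x l.+1 adj_le).
  rewrite -sum1_card [X in (_ <= X)%N]big_mkcond; apply: leq_sum => y _.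
  by rewrite inE; case: (Defs.within G l.+1 (inl x) (inl y)).
by rewrite big_split sumr_const card_ord -[_ *+ nV M]mulr_natl -!mulr_sumr mulrDr.
Qed.

Lemma symmetric2_of_avg_cond_tv eps D l (p : 'I_(nV M) -> Omega -> R) :
  (0 < nV M)%N -> (0 < l)%N -> (forall w, #|[set v | adj G w v]| <= D)%N ->
  (D.+1 ^ l.+1)%:R < eps / 2 * (nV M)%:R ->
  \sum_x avg_cond_tv x l (p x) < eps / 4 * (nV M)%:R ->
  symmetric2 psi G eps.
Proof.
move=> nV_gt0 l_gt0 adj_le K_lt S_lt; rewrite /symmetric2.
apply: le_lt_trans (ler_wpM2l _ (sum_tv_marg2_le p l_gt0 adj_le)) _.
  by rewrite invr_ge0 exprn_ge0.
have n_gt0 : 0 < (nV M)%:R :> R by rewrite ltr0n.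
rewrite (_ : _ ^- 2 * _ = ((D.+1 ^ l.+1)%:R + 2 * \sum_x avg_cond_tv x l (p x)) / (nV M)%:R).
  by rewrite ltr_pdivrMr //; lra.
by field; exact: lt0r_neq0.
Qed.

End Conditioning.

Local Open Scope classical_set_scope.

Theorem lemma4p12 (R : realType) (Delta : nat) (Omega Theta PsiI : finType)
    (ar : PsiI -> nat) (psi : PsiI -> seq Omega -> R)
    (Ms : nat -> model Theta PsiI) (theta : probability (TT Theta PsiI) R)
    (pV : TT Theta PsiI -> Omega -> R) (pF : TT Theta PsiI -> seq Omega -> R) :
  (0 < Delta)%N -> (0 < #|Omega|)%N -> (0 < #|Theta|)%N ->
  psi_ok Delta ar psi ->
  (forall n, model_ok Delta ar (Ms n) /\ nV (Ms n) = n) ->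
  theta [set T | wf_templ Delta ar T] = 1%E ->
  high_girth psi Ms ->
  local_conv Ms theta ->
  marg_assign Delta ar psi pV pF ->
  forall eps : R, 0 < eps ->
  exists delta : R, 0 < delta /\
  forall l : nat, (0 < l)%N ->
  exists n0 : nat, forall n : nat, (n0 < n)%N ->
  forall G, G \in fgraphs (Ms n) ->
    (n%:R)^-1 * \sum_(x : 'I_(nV (Ms n)))
       \sum_(sg : config Omega (Ms n))
          gibbs psi G sg *
          tv (cond_marg psi G x l sg) (p_l theta pV l (nbhd G (inl x) l))
      < delta ^+ 9 ->
    symmetric2 psi G eps /\
    \sum_(x : 'I_(nV (Ms n))) tv (marg psi G x) (p_l theta pV l (nbhd G (inl x) l))
      < eps * n%:R.
Proof.
move=> _ Omega_gt0 _ [_ [psi_gt0 _]] hMs _ _ _ _ eps eps_gt0.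
pose delta := eps / (eps + 4).
have delta_gt0 : 0 < delta by rewrite divr_gt0 // ltr_wpDr.
have delta9_le : delta ^+ 9 <= eps / 4.
  have delta_le1 : delta <= 1 by rewrite ler_pdivrMr ?ltr_wpDr //; lra.
  apply: le_trans (ler_iXnr _ (ltW delta_gt0) delta_le1) _ => //.
  by rewrite ler_pM2l // lef_pV2 ?posrE ?ltr_wpDr //; lra.
exists delta; split => // l l_gt0.
pose K := (Delta.+1 ^ l.+1)%N.
exists (Num.trunc (2 * K%:R / eps)) => n n_big G hG err_small.
have [hM nV_n] := hMs n.
have n_gt0 : (0 < n)%N by apply: leq_ltn_trans n_big.
have nR_gt0 : 0 < n%:R :> R by rewrite ltr0n.
have nVE : (nV (Ms n))%:R = n%:R :> R by rewrite nV_n.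
have mu_gt0 := gibbs_gt0 hM hG psi_gt0 Omega_gt0.
have mu_sum1 := sum_gibbs hM hG psi_gt0 Omega_gt0.
set S := \sum_x avg_cond_tv psi G x l (p_l theta pV l (nbhd G (inl x) l)).
have S_lt : S < eps / 4 * n%:R.
  by rewrite -ltr_pdivrMr // mulrC (lt_le_trans err_small).
split.
- apply: (symmetric2_of_avg_cond_tv mu_gt0 mu_sum1 _ l_gt0 (card_adj_le hM hG));
    rewrite ?nV_n ?nVE //; last exact: S_lt.
  have : 2 * K%:R / eps < n%:R by apply: lt_le_trans (truncnS_gt _) _; rewrite ler_nat.
  by rewrite ltr_pdivrMr //; lra.
- apply: le_lt_trans (ler_sum _ (fun x _ => tv_marg_le mu_gt0 mu_sum1 x l _)) _.
  by rewrite -/S; have := mulr_gt0 eps_gt0 nR_gt0; lra.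
Qed.
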